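(* Consider the secure distributed linearly separable computation problem with $\mathsf K_{\rm c}=1$ and $\mathsf M=\frac{\mathsf K}{\mathsf N}(\mathsf N-\mathsf N_{\rm r}+1)$, and any secure scheme with assignment $\mathbf Z=(\mathcal Z_1,\dots,\mathcal Z_{\mathsf N})$ and randomness size $\eta$. If there exists an ordered set of servers $\mathbf s=(s_1,\dots,s_{|\mathbf s|})$ in $[\mathsf N]$ such that $\mathcal Z_{s_i}\setminus(\mathcal Z_{s_1}\cup\cdots\cup\mathcal Z_{s_{i-1}})\neq\emptyset$ for all $i\in[|\mathbf s|]$, then $\eta\ge|\mathbf s|-1$.
   Context: Problem setting. $\mathsf K,\mathsf N,\mathsf N_{\rm r},\mathsf M$ are positive integers with $\mathsf N_{\rm r}\le \mathsf N$ and $\mathsf N$ dividing $\mathsf K$. Fix a prime power $\mathsf q$ and a positive integer $\mathsf L$. Datasets $D_1,\dots,D_{\mathsf K}$ are independent; the message $W_k=f_k(D_k)\in\mathbb F_{\mathsf q}^{\mathsf L}$, and $W_1,\dots,W_{\mathsf K}$ are mutually independent, each uniform over $\mathbb F_{\mathsf q}^{\mathsf L}$. The user wants $W_1+\cdots+W_{\mathsf K}$. A secure scheme consists of: an assignment $\mathcal Z_n\subseteq[\mathsf K]$, $|\mathcal Z_n|\le\mathsf M$, $n\in[\mathsf N]$; a random variable $Q$ on a finite set, independent of $(D_1,\dots,D_{\mathsf K})$, given to every server but not to the user; transmissions $X_n=\psi_n(\{W_k:k\in\mathcal Z_n\},Q)\in\mathbb F_{\mathsf q}^{\mathsf T_n}$;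 decodability: for every $\mathcal A\subseteq[\mathsf N]$ with $|\mathcal A|=\mathsf N_{\rm r}$, $W_1+\cdots+W_{\mathsf K}$ is a function of $\{X_n:n\in\mathcal A\}$; security: $I(W_1,\dots,W_{\mathsf K};X_1,\dots,X_{\mathsf N}\mid W_1+\cdots+W_{\mathsf K})=0$. The randomness size is $\eta=H(Q)/\mathsf L$, with entropy measured in $\mathsf q$-ary units. (It is known that when $\mathsf M=\frac{\mathsf K}{\mathsf N}(\mathsf N-\mathsf N_{\rm r}+1)$, in any such decodable scheme each dataset is assigned to exactly $\mathsf N-\mathsf N_{\rm r}+1$ servers and each server receives exactly $\mathsf M$ datasets.) *)

From HB Require Import structures.
From mathcomp Require Import all_boot all_order all_algebra.
From mathcomp Require Import reals exp.
Set Implicit Arguments. Unset Strict Implicit. Unset Printing Implicit Defensive.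
Import Order.TTheory GRing.Theory Num.Theory.
Local Open Scope ring_scope.

Section InfoTheory.
Variables (R : realType) (Omega : finType) (P : Omega -> R).

Definition prob (A : pred Omega) : R := \sum_(w : Omega | A w) P w.

Definition entropy (b : nat) (V : eqType) (Y : Omega -> V) : R :=
  - \sum_(v <- undup [seq Y w | w <- enum Omega])
      prob (fun w => Y w == v) * (ln (prob (fun w => Y w == v)) / ln b%:R).

Definition cond_mutual_info (b : nat) (A B C : eqType)
    (X : Omega -> A) (Y : Omega -> B) (Z : Omega -> C) : R :=
  entropy b (fun w => (X w, Z w)) + entropy b (fun w => (Y w, Z w))
  - entropy b (fun w => (X w, Y w, Z w)) - entropy b Z.
End InfoTheory.

(* Sample space: all messages W = (W_1,...,W_K), W_k in F^L (row vectors),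
   together with the shared randomness Q in a finite set T.
   W is uniform on (F^L)^K and independent of Q, whose law is pQ. *)
Section Model.
Variables (R : realType) (F : finFieldType) (L K N : nat) (T : finType).

Definition msgs := {ffun 'I_K -> 'rV[F]_L}.
Definition Omega := (msgs * T)%type.

Definition joint_prob (pQ : T -> R) (o : Omega) : R :=
  pQ o.2 / (#|{: msgs}|)%:R.

Definition W_of (o : Omega) : msgs := o.1.
Definition Q_of (o : Omega) : T := o.2.
Definition sumW (o : Omega) : 'rV[F]_L := \sum_(k < K) o.1 k.

(* X_n = psi_n({W_k : k in Z_n}, Q): psi_n only depends on the messages in Z_n *)
Definition depends_only_on (Z : 'I_N -> {set 'I_K}) (Tn : 'I_N -> nat)
    (psi : forall n : 'I_N, msgs -> T -> 'rV[F]_(Tn n)) : Prop :=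
  forall (n : 'I_N) (w w' : msgs) (t : T),
    (forall k, k \in Z n -> w k = w' k) -> psi n w t = psi n w' t.

Definition all_X (Tn : 'I_N -> nat)
    (psi : forall n : 'I_N, msgs -> T -> 'rV[F]_(Tn n)) (o : Omega)
    : {dffun forall n : 'I_N, 'rV[F]_(Tn n)} :=
  [ffun n => psi n o.1 o.2].

Definition decodable (pQ : T -> R) (Nr : nat) (Tn : 'I_N -> nat)
    (psi : forall n : 'I_N, msgs -> T -> 'rV[F]_(Tn n)) : Prop :=
  forall A : {set 'I_N}, #|A| = Nr ->
    exists g : (forall n : 'I_N, 'rV[F]_(Tn n)) -> 'rV[F]_L,
      forall o : Omega, 0 < joint_prob pQ o ->
        sumW o = g (fun n => if n \in A then psi n o.1 o.2 else 0).

Definition secure (pQ : T -> R) (Tn : 'I_N -> nat)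
    (psi : forall n : 'I_N, msgs -> T -> 'rV[F]_(Tn n)) : Prop :=
  cond_mutual_info (joint_prob pQ) #|F| W_of (all_X psi) sumW = 0.

Definition randomness_size (pQ : T -> R) : R :=
  entropy (joint_prob pQ) #|F| Q_of / L%:R.

Definition new_data_seq (Z : 'I_N -> {set 'I_K}) (s : seq 'I_N) : Prop :=
  forall (p r : seq 'I_N) (x : 'I_N), s = p ++ x :: r ->
    Z x :\: \bigcup_(j <- p) Z j != set0.
End Model.

From HB Require Import structures.
From mathcomp Require Import all_boot all_order all_algebra.
From mathcomp Require Import reals exp.
From mathcomp Require Import zify lra.
From Stdlib Require Import FunctionalExtensionality.
Import Order.TTheory GRing.Theory Num.Theory.
Local Open Scope ring_scope.

Set Implicit Arguments. Unset Strict Implicit. Unset Printing Implicit Defensive.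

(* Each server stores at most M = K (N - Nr + 1) / N messages, and no Nr servers
   can all miss a message W_k (they could not tell W = 0 from W = e_k); counting
   pairs (server, stored message) then shows that every W_k is stored on exactly
   N - Nr + 1 servers.  Adding one holder n of W_k to the Nr - 1 servers missing it
   gives a decoding set, so once Q and the other messages are fixed, X_n determines
   W_k.  Along s every server brings a message not stored on the earlier ones, so
   for fixed Q the transmissions X_s determine |s| messages given the others: each
   value of X_s has probability at most q^(-L|s|), i.e. H(X_s) >= L |s|.  Security
   turns this into H(Q) >= H(X_s) - H(W_1 + ... + W_K) >= L |s| - L. *)

Section PlogP.
Variable R : realType.

Definition plogp (p : R) := p * ln p.

Lemma ln_le_subr1 (x : R) : 0 < x -> ln x <= x - 1.
Proof.
by move=> x_gt0; rewrite -[x in ln x](subrKC 1) le_ln1Dx // ltrBrDl subrr.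
Qed.

Lemma plogp_le_mul_ln (p S : R) : 0 <= p -> p <= S -> plogp p <= p * ln S.
Proof.
move=> p_ge0 pS; have [->|p_neq0] := eqVneq p 0; first by rewrite /plogp !mul0r.
have p_gt0 : 0 < p by rewrite lt_def p_neq0.
by rewrite /plogp ler_wpM2l // ler_ln ?posrE ?p_gt0 ?(lt_le_trans p_gt0 pS).
Qed.

Lemma plogp_sum_le (I : finType) (Q : pred I) (p : I -> R) :
  (forall i, 0 <= p i) -> \sum_(i | Q i) plogp (p i) <= plogp (\sum_(i | Q i) p i).
Proof.
move=> p_ge0; rewrite {2}/plogp mulr_suml; apply: ler_sum => i Qi.
by apply: plogp_le_mul_ln => //; rewrite (bigD1 i) //= lerDl sumr_ge0.
Qed.

(* The tangent line of the concave map [p |-> - plogp p] at [p = n^-1]. *)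
Lemma oppr_plogp_le (p n : R) : 0 <= p -> 0 < n -> - plogp p <= p * ln n + n^-1 - p.
Proof.
move=> p_ge0 n_gt0; have [->|p_neq0] := eqVneq p 0.
  by rewrite /plogp !mul0r oppr0 add0r addr0 invr_ge0 ltW.
have p_gt0 : 0 < p by rewrite lt_def p_neq0.
have np_gt0 : 0 < n * p by rewrite mulr_gt0.
have inv_np_gt0 : 0 < (n * p)^-1 by rewrite invr_gt0.
have := ler_wpM2l (ltW p_gt0) (ln_le_subr1 inv_np_gt0).
rewrite lnV ?posrE // lnM ?posrE // mulrBr mulr1 invfM mulrCA mulfV ?gt_eqF //.
by rewrite mulr1 /plogp; lra.
Qed.

Lemma plogp_div (x c : R) : 0 <= x -> 0 < c -> plogp (x / c) = plogp x / c - x / c * ln c.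
Proof.
move=> x_ge0 c_gt0; have [->|x_neq0] := eqVneq x 0; first by rewrite /plogp !mul0r subrr.
have x_gt0 : 0 < x by rewrite lt_def x_neq0.
by rewrite /plogp ln_div ?posrE // mulrBr mulrAC.
Qed.

End PlogP.

Section Entropy.
Variables (R : realType) (Omega : finType) (P : Omega -> R) (b : nat).
Hypotheses (P_ge0 : forall w, 0 <= P w) (P_sum1 : \sum_w P w = 1) (b_gt1 : (1 < b)%N).

Lemma prob_ge0 (A : pred Omega) : 0 <= prob P A.
Proof. exact: sumr_ge0. Qed.

Lemma sum_prob (V : finType) (Y : Omega -> V) : \sum_v prob P (fun w => Y w == v) = 1.
Proof.
rewrite -P_sum1 /prob (exchange_big_dep predT) //=; apply: eq_bigr => w _.
by rewrite (big_pred1 (Y w)) // => v; rewrite eq_sym.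
Qed.

Lemma prob_comp (V U : finType) (Y : Omega -> V) (f : V -> U) u :
  prob P (fun w => f (Y w) == u) = \sum_(v | f v == u) prob P (fun w => Y w == v).
Proof.
rewrite /prob (partition_big Y (fun v => f v == u)) //=.
apply: eq_bigr => v /eqP fv; apply: eq_bigl => w.
by case: (eqVneq (Y w) v) => [->|]; rewrite ?fv ?eqxx ?andbF.
Qed.

Lemma entropyE (V : finType) (Y : Omega -> V) :
  entropy P b Y = - (\sum_v plogp (prob P (fun w => Y w == v))) / ln b%:R.
Proof.
rewrite /entropy mulNr big_uniq ?undup_uniq // mulr_suml.
rewrite [in RHS](bigID (mem (undup [seq Y w | w <- enum Omega]))) /=.
rewrite [X in _ = - (_ + X)]big1 ?addr0; first by under eq_bigr do rewrite mulrA.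
move=> v v_notin; rewrite /prob big_pred0 ?mul0r ?/plogp ?mul0r // => w.
by apply: contraNF v_notin => /eqP <-; rewrite mem_undup map_f ?mem_enum.
Qed.

Lemma ln_b_gt0 : 0 < ln b%:R :> R.
Proof. by rewrite ln_gt0 // ltr1n. Qed.

Lemma entropy_comp_le (V U : finType) (Y : Omega -> V) (Y' : Omega -> U) (f : V -> U) :
  (forall w, Y' w = f (Y w)) -> entropy P b Y' <= entropy P b Y.
Proof.
move=> eY'; rewrite !entropyE ler_pM2r ?invr_gt0 ?ln_b_gt0 // lerN2.
rewrite (partition_big f predT) //=; apply: ler_sum => u _.
have -> : prob P (fun w => Y' w == u) = prob P (fun w => f (Y w) == u).
  by apply: eq_bigl => w; rewrite eY'.
by rewrite prob_comp plogp_sum_le // => v; apply: prob_ge0.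
Qed.

Lemma entropy_le_ln_card (V : finType) (Y : Omega -> V) :
  entropy P b Y <= ln #|V|%:R / ln b%:R.
Proof.
rewrite entropyE ler_pM2r ?invr_gt0 ?ln_b_gt0 // -sumrN.
case: (pickP Omega) => [w _|Omega0]; last first.
  by move: P_sum1; rewrite big_pred0 // => /eqP; rewrite eq_sym oner_eq0.
have V_gt0 : 0 < #|V|%:R :> R by rewrite ltr0n; apply/card_gt0P; exists (Y w).
apply: (le_trans (ler_sum _ (fun v _ => oppr_plogp_le (prob_ge0 _) V_gt0))).
rewrite sumrB big_split /= -mulr_suml !sum_prob mul1r sumr_const.
by rewrite -[_^-1 *+ _]mulr_natr mulVf ?gt_eqF // addrK.
Qed.

Lemma entropy_ge_of_prob_le (V : finType) (Y : Omega -> V) (c : R) :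
  0 < c -> (forall v, prob P (fun w => Y w == v) <= c) ->
  - ln c / ln b%:R <= entropy P b Y.
Proof.
move=> c_gt0 Y_le; rewrite entropyE ler_pM2r ?invr_gt0 ?ln_b_gt0 // lerN2.
rewrite -[ln c]mul1r -(sum_prob Y) mulr_suml; apply: ler_sum => v _.
exact: plogp_le_mul_ln (prob_ge0 _) (Y_le v).
Qed.

End Entropy.

Lemma exists_subset_card (I : finType) (A : {set I}) k :
  (k <= #|A|)%N -> exists2 B : {set I}, B \subset A & #|B| = k.
Proof.
move=> k_le; exists [set i in take k (enum A)].
  by apply/subsetP => i; rewrite inE => /mem_take; rewrite mem_enum.
by rewrite cardsE (card_uniqP (take_uniq _ (enum_uniq _))) size_takel // -cardE.
Qed.

Lemma sum_card_sets (I J : finType) (Z : I -> {set J}) :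
  (\sum_i #|Z i| = \sum_j #|[set i | j \in Z i]|)%N.
Proof.
under eq_bigr do rewrite -sum1_card.
rewrite (exchange_big_dep predT) //=; apply: eq_bigr => j _.
by rewrite -sum1_card; apply: eq_bigl => i; rewrite inE.
Qed.

Lemma eq_of_sum_le_const (I : finType) (f : I -> nat) a :
  (forall i, a <= f i)%N -> (\sum_i f i <= #|I| * a)%N -> forall i, f i = a.
Proof.
move=> a_le sum_le i; have I_gt0 : (0 < #|I|)%N by apply/card_gt0P; exists i.
have : (\sum_(j | j != i) a <= \sum_(j | j != i) f j)%N by apply: leq_sum.
rewrite sum_nat_const cardC1; move: sum_le (a_le i); rewrite (bigD1 i) //=; nia.
Qed.

Lemma card_ffun_agree_off_le (I V : finType) (v0 : V) (D : {set I})
    (A : {set {ffun I -> V}}) :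
  {in A &, forall f g : {ffun I -> V}, (forall i, i \notin D -> f i = g i) -> f = g} ->
  (#|A| * #|V| ^ #|D| <= #|{ffun I -> V}|)%N.
Proof.
move=> A_inj; pose G := [set g | g \in pffun_on v0 D predT].
have -> : (#|V| ^ #|D| = #|G|)%N by rewrite cardsE card_pffun_on.
rewrite -cardsX.
pose patch (fg : {ffun I -> V} * {ffun I -> V}) : {ffun I -> V} :=
  [ffun i => if i \in D then fg.2 i else fg.1 i].
apply: (@leq_card_in _ _ patch) => -[f g] [f' g'] /setXP [fA gD] /setXP [f'A g'D] /=.
move=> /ffunP patch_eq; have off_D i : i \notin D -> f i = f' i.
  by move=> iD; have := patch_eq i; rewrite !ffunE (negbTE iD).
have on_D i : i \in D -> g i = g' i.
  by move=> iD; have := patch_eq i; rewrite !ffunE iD.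
congr (_, _); first exact: A_inj off_D.
apply/ffunP => i; case: (boolP (i \in D)) => [/on_D //|iD].
by move: gD g'D; rewrite !inE => /pffun_onP [/supportP -> // _] /pffun_onP [/supportP -> // _].
Qed.

Lemma card_rV_gt0 (F : finFieldType) L : (0 < #|{: 'rV[F]_L}|)%N.
Proof. by apply/card_gt0P; exists 0. Qed.

Lemma ln_card_rV (R : realType) (F : finFieldType) L :
  ln #|{: 'rV[F]_L}|%:R / ln #|F|%:R = L%:R :> R.
Proof.
have q_gt1 := card_finNzRing_gt1 F.
rewrite card_mx mul1n natrX lnXn ?ltr0n ?(ltn_trans _ q_gt1) // mulrnAl.
by rewrite divff // gt_eqF // ln_gt0 // ltr1n.
Qed.

Section UniformMessages.
Variables (R : realType) (F : finFieldType) (L K : nat) (T : finType) (pQ : T -> R).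
Hypotheses (pQ_ge0 : forall t, 0 <= pQ t) (pQ_sum1 : \sum_t pQ t = 1).
Local Notation Omega := (Omega F L K T).
Local Notation P := (@joint_prob R F L K T pQ).
Local Notation nW := (#|{: msgs F L K}|%:R : R).

Lemma nW_gt0 : 0 < nW.
Proof. by rewrite ltr0n; apply/card_gt0P; exists 0. Qed.

Lemma exists_pQ_gt0 : exists t, 0 < pQ t.
Proof.
case: (pickP (fun t => 0 < pQ t)) => [t pQt_gt0|pQ_le0]; first by exists t.
move: pQ_sum1; rewrite big1 => [/eqP|t _]; first by rewrite eq_sym oner_eq0.
by apply/eqP; rewrite eq_le pQ_ge0 andbT leNgt pQ_le0.
Qed.

Lemma joint_prob_ge0 o : 0 <= P o.
Proof. by rewrite divr_ge0 ?ler0n. Qed.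

Lemma joint_prob_gt0 (w : msgs F L K) t : 0 < pQ t -> 0 < P ((w, t) : Omega).
Proof. by move=> pQt_gt0; rewrite divr_gt0 ?nW_gt0. Qed.

Lemma sum_Omega (G : Omega -> R) :
  \sum_(o : Omega) G o = \sum_(w : msgs F L K) \sum_t G (w, t).
Proof. by rewrite pair_big; apply: eq_bigr => -[]. Qed.

Lemma sum_msgs_const (x : R) : \sum_(w : msgs F L K) x = x * nW.
Proof. by rewrite sumr_const mulr_natr. Qed.

Lemma sum_joint_prob : \sum_o P o = 1.
Proof.
rewrite sum_Omega /joint_prob.
under eq_bigr do rewrite -mulr_suml pQ_sum1 mul1r.
by rewrite sum_msgs_const mulVf ?gt_eqF ?nW_gt0.
Qed.

Lemma prob_Q t : prob P (fun o => Q_of o == t) = pQ t.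
Proof.
rewrite /prob big_mkcond sum_Omega /=.
under eq_bigr do rewrite -big_mkcond (big_pred1 t) //=.
by rewrite /joint_prob /= sum_msgs_const divfK ?gt_eqF ?nW_gt0.
Qed.

Lemma prob_W w : prob P (fun o => W_of o == w) = nW^-1.
Proof.
rewrite /prob big_mkcond sum_Omega /= (bigD1 w) //= [X in _ + X]big1 ?addr0.
  by rewrite eqxx /joint_prob /= -mulr_suml pQ_sum1 mul1r.
by move=> w' /negbTE w'w; apply: big1 => t _; rewrite w'w.
Qed.

Lemma entropy_outcome b :
  entropy P b (fun o : Omega => o) = entropy P b (@Q_of F L K T) + entropy P b (@W_of F L K T).
Proof.
rewrite !entropyE -mulrDl -opprD; congr (- _ * _).
under eq_bigr => o _ do rewrite [prob _ _](big_pred1 o) //.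
under [in RHS]eq_bigr do rewrite prob_Q.
under [X in _ = _ + X]eq_bigr do rewrite prob_W.
rewrite sum_Omega sum_msgs_const /joint_prob /= sum_msgs_const.
under eq_bigr => t _ do rewrite (plogp_div (pQ_ge0 t) nW_gt0).
rewrite sumrB -!mulr_suml pQ_sum1 mul1r mulrBl !divfK ?gt_eqF ?nW_gt0 //.
by rewrite /plogp lnV ?posrE ?nW_gt0 // mulrN mulNr.
Qed.

Lemma entropy_sumW_le : entropy P #|F| (@sumW F L K T) <= L%:R.
Proof.
rewrite -(ln_card_rV R F L).
exact: (entropy_le_ln_card joint_prob_ge0 sum_joint_prob (card_finNzRing_gt1 F)).
Qed.

End UniformMessages.

Section Decoding.
Variables (R : realType) (F : finFieldType) (L K N Nr M : nat) (T : finType) (pQ : T -> R).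
Variables (Z : 'I_N -> {set 'I_K}) (Tn : 'I_N -> nat)
  (psi : forall n : 'I_N, msgs F L K -> T -> 'rV[F]_(Tn n)).
Hypotheses (L_gt0 : (0 < L)%N) (Nr_le_N : (Nr <= N)%N) (N_dvd_K : (N %| K)%N)
  (eM : M = (K %/ N * (N - Nr + 1))%N) (Z_le_M : forall n, (#|Z n| <= M)%N).
Hypotheses (pQ_ge0 : forall t, 0 <= pQ t) (pQ_sum1 : \sum_t pQ t = 1).
Hypotheses (psi_dep : depends_only_on Z psi) (psi_dec : decodable pQ Nr psi).

Local Notation nW := (#|{: msgs F L K}|%:R : R).

Definition holders (k : 'I_K) : {set 'I_N} := [set n | k \in Z n].

Lemma decode_msg (A : {set 'I_N}) k t (w w' : msgs F L K) :
  #|A| = Nr -> 0 < pQ t -> (forall j, j != k -> w j = w' j) ->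
  (forall n, n \in A -> psi n w t = psi n w' t) -> w k = w' k.
Proof.
move=> A_card pQt_gt0 w_w' A_w_w'; have [g g_dec] := psi_dec A_card.
have : sumW ((w, t) : Omega F L K T) = sumW ((w', t) : Omega F L K T).
  rewrite !g_dec ?joint_prob_gt0 //=; congr g.
  by apply: functional_extensionality_dep => n; case: ifP => // /A_w_w' ->.
rewrite /sumW /= (bigD1 k) // [in RHS](bigD1 k) //=.
by rewrite (eq_bigr _ (fun j jk => w_w' j jk)) => /addIr.
Qed.

Lemma card_nonholders_lt k : (#|~: holders k| < Nr)%N.
Proof.
rewrite ltnNge; apply/negP => /exists_subset_card [A A_sub A_card].
have [t pQt_gt0] := exists_pQ_gt0 pQ_ge0 pQ_sum1.
have one_neq0 : const_mx 1 != 0 :> 'rV[F]_L.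
  by apply/eqP => /matrixP /(_ 0 (Ordinal L_gt0)); rewrite !mxE; apply/eqP; rewrite oner_eq0.
pose ek : msgs F L K := [ffun j => if j == k then const_mx 1 else 0].
suff : (0 : msgs F L K) k = ek k by rewrite !ffunE eqxx => /esym/eqP; rewrite (negbTE one_neq0).
apply: (decode_msg A_card pQt_gt0) => [j /negbTE jk|n nA]; first by rewrite !ffunE jk.
apply: psi_dep => j jZn; rewrite !ffunE; case: eqP => // jk.
by move: (subsetP A_sub n nA); rewrite !inE -jk jZn.
Qed.

Lemma card_holders k : #|holders k| = (N - Nr + 1)%N.
Proof.
have holders_ge j : (N - Nr + 1 <= #|holders j|)%N.
  by have := card_nonholders_lt j; have := cardsC (holders j); rewrite card_ord; lia.
apply: (eq_of_sum_le_const holders_ge); rewrite card_ord -sum_card_sets.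
have -> : (K * (N - Nr + 1) = \sum_(n < N) M)%N.
  by rewrite sum_nat_const card_ord eM mulnA [(N * _)%N]mulnC divnK.
exact: leq_sum.
Qed.

Lemma card_nonholders k : #|~: holders k| = (Nr - 1)%N.
Proof.
have := card_nonholders_lt k; have := cardsC (holders k).
by rewrite card_ord card_holders; lia.
Qed.

Lemma msg_determined k n t (w w' : msgs F L K) :
  k \in Z n -> 0 < pQ t -> (forall j, j != k -> w j = w' j) ->
  psi n w t = psi n w' t -> w k = w' k.
Proof.
move=> kZn pQt_gt0 w_w' psi_n; have n_holds : n \notin ~: holders k by rewrite !inE negbK.
apply: (@decode_msg (n |: ~: holders k) k t) => //.
  by have := card_nonholders_lt k; rewrite cardsU1 n_holds card_nonholders; lia.
move=> m /setU1P [-> // | m_lacks]; apply: psi_dep => j jZm; apply: w_w'.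
by move: m_lacks; rewrite !inE; apply: contraNneq => <-.
Qed.

Lemma new_data_seq_rcons p x : new_data_seq Z (rcons p x) ->
  new_data_seq Z p /\ Z x :\: \bigcup_(j <- p) Z j != set0.
Proof.
move=> new_px; split; last by apply: (new_px p [::] x); rewrite cats1.
by move=> p1 p2 y p_eq; apply: (new_px p1 (rcons p2 x) y); rewrite p_eq rcons_cat.
Qed.

Lemma new_data_determines t s : 0 < pQ t -> new_data_seq Z s ->
  exists Ks : {set 'I_K}, [/\ #|Ks| = size s, Ks \subset \bigcup_(n <- s) Z n &
    forall w w' : msgs F L K, (forall n, n \in s -> psi n w t = psi n w' t) ->
      (forall k, k \notin Ks -> w k = w' k) -> w = w'].
Proof.
move=> pQt_gt0; elim/last_ind: s => [_|p x IHp /new_data_seq_rcons [new_p new_x]].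
  exists set0; rewrite cards0 sub0set; split=> // w w' _ w_w'.
  by apply/ffunP => k; rewrite w_w' ?inE.
have [Ks [Ks_card Ks_sub Ks_det]] := IHp new_p.
have [k0] := set0Pn _ new_x; rewrite inE => /andP [k0_new k0_x].
have k0_p n : n \in p -> k0 \notin Z n.
  by move=> np; apply: contra k0_new => k0Zn; rewrite bigcup_seq; apply/bigcupP; exists n.
have k0_Ks : k0 \notin Ks by apply: contra k0_new => /(subsetP Ks_sub).
exists (k0 |: Ks); split.
- by rewrite cardsU1 k0_Ks Ks_card size_rcons.
- by rewrite -cats1 big_cat big_seq1 /= setUC setUSS ?sub1set.
move=> w w' psi_eq w_w'.
pose w2 : msgs F L K := [ffun j => if j == k0 then w' k0 else w j].
have w2_w' : w2 = w'.
  apply: Ks_det => [n np|k kKs]; last first.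
    by rewrite ffunE; case: eqP => [-> //|/eqP kk0]; rewrite w_w' // !inE negb_or kk0.
  rewrite -psi_eq ?mem_rcons ?inE ?np ?orbT //; apply: psi_dep => j jZn.
  by rewrite ffunE; case: eqP => // jk0; move: (k0_p n np); rewrite -jk0 jZn.
have w_k0 : w k0 = w' k0.
  rewrite -[in RHS]w2_w'; apply: (@msg_determined k0 x t) => //.
    by move=> j /negbTE jk0; rewrite ffunE jk0.
  by rewrite w2_w'; apply: psi_eq; rewrite mem_rcons mem_head.
by rewrite -w2_w'; apply/ffunP => j; rewrite ffunE; case: eqP => // ->.
Qed.

Definition restrict_servers (s : seq 'I_N) (X : {dffun forall n : 'I_N, 'rV[F]_(Tn n)}) :
  {dffun forall n : 'I_N, 'rV[F]_(Tn n)} := [ffun n => if n \in s then X n else 0].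

Definition X_on (s : seq 'I_N) (o : Omega F L K T) := restrict_servers s (all_X psi o).

Lemma prob_X_on_le s : new_data_seq Z s -> forall x,
  prob (joint_prob pQ) (fun o => X_on s o == x) <= ((#|{: 'rV[F]_L}| ^ size s)%N%:R)^-1.
Proof.
move=> new_s x; set r := (_ ^ _)%N%:R.
have r_gt0 : 0 < r by rewrite ltr0n expn_gt0 card_rV_gt0.
rewrite /prob big_mkcond sum_Omega exchange_big /= -[r^-1]mul1r -pQ_sum1 mulr_suml.
apply: ler_sum => t _; rewrite -big_mkcond /=.
pose Fb := [set w : msgs F L K | X_on s (w, t) == x].
have -> : \sum_(w | X_on s (w, t) == x) joint_prob pQ (w, t) = \sum_(w in Fb) pQ t / nW.
  by apply: eq_big => [w|//]; rewrite inE.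
rewrite sumr_const -[_ *+ #|Fb|]mulr_natr -mulrA.
have [->|pQt_neq0] := eqVneq (pQ t) 0; first by rewrite !mul0r.
have pQt_gt0 : 0 < pQ t by rewrite lt_def pQt_neq0 pQ_ge0.
rewrite ler_wpM2l // ler_pdivrMl ?nW_gt0 // ler_pdivlMr // -natrM ler_nat.
have [Ks [Ks_card _ Ks_det]] := new_data_determines pQt_gt0 new_s.
rewrite -Ks_card; apply: (card_ffun_agree_off_le 0) => w w'; rewrite !inE.
move=> /eqP X_w /eqP X_w' w_w'; apply: Ks_det w_w' => n ns.
by have /ffunP/(_ n) := etrans X_w (esym X_w'); rewrite !ffunE /= ns.
Qed.

Lemma entropy_X_on_ge s : new_data_seq Z s ->
  (size s)%:R * L%:R <= entropy (joint_prob pQ) #|F| (X_on s).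
Proof.
move=> new_s; have r_gt0 : 0 < (#|{: 'rV[F]_L}| ^ size s)%N%:R :> R.
  by rewrite ltr0n expn_gt0 card_rV_gt0.
have := entropy_ge_of_prob_le (joint_prob_ge0 pQ_ge0) (sum_joint_prob F L K pQ_sum1)
  (card_finNzRing_gt1 F) _ (prob_X_on_le new_s).
rewrite invr_gt0 r_gt0 lnV ?posrE // opprK natrX lnXn ?ltr0n ?card_rV_gt0 //.
by rewrite -[ln _ *+ _]mulr_natl -mulrA ln_card_rV => /(_ isT).
Qed.

End Decoding.

Section Security.
Variables (R : realType) (F : finFieldType) (L K N : nat) (T : finType) (pQ : T -> R).
Variables (Tn : 'I_N -> nat) (psi : forall n : 'I_N, msgs F L K -> T -> 'rV[F]_(Tn n)).
Hypotheses (pQ_ge0 : forall t, 0 <= pQ t) (pQ_sum1 : \sum_t pQ t = 1).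
Hypothesis psi_sec : secure pQ psi.
Local Notation H := (entropy (@joint_prob R F L K T pQ) #|F|).

(* H(Q) + H(W) = H(W, Q) >= H(W, X, S) = H(W, S) + H(X, S) - H(S) >= H(W) + H(Y) - H(S). *)
Lemma entropy_Q_ge_of_secure (V : finType) (Y : Omega F L K T -> V)
    (f : {dffun forall n : 'I_N, 'rV[F]_(Tn n)} -> V) :
  (forall o, Y o = f (all_X psi o)) -> H Y - H (@sumW F L K T) <= H (@Q_of F L K T).
Proof.
move=> Y_f; have q_gt1 := card_finNzRing_gt1 F.
have P_ge0 := joint_prob_ge0 (F := F) (L := L) (K := K) pQ_ge0.
have H_WXS_le := entropy_comp_le P_ge0 q_gt1
  (Y := id) (f := fun o => (W_of o, all_X psi o, sumW o)) (fun => erefl).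
have H_W_le := entropy_comp_le P_ge0 q_gt1
  (Y := fun o => (W_of o, sumW o)) (f := fst) (fun => erefl).
have H_Y_le := entropy_comp_le P_ge0 q_gt1
  (Y := fun o => (all_X psi o, sumW o)) (Y' := Y) (f := f \o fst) Y_f.
have := entropy_outcome F L K pQ_ge0 pQ_sum1 #|F|.
move: psi_sec; rewrite /secure /cond_mutual_info; lra.
Qed.

End Security.

Theorem theorem3 (R : realType) (F : finFieldType) (L K N Nr M : nat)
    (T : finType) (pQ : T -> R)
    (Z : 'I_N -> {set 'I_K}) (Tn : 'I_N -> nat)
    (psi : forall n : 'I_N, msgs F L K -> T -> 'rV[F]_(Tn n))
    (s : seq 'I_N) :
  (0 < L)%N -> (0 < K)%N -> (0 < Nr)%N -> (Nr <= N)%N -> (N %| K)%N ->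
  M = (K %/ N * (N - Nr + 1))%N ->
  (forall t, 0 <= pQ t) -> \sum_(t : T) pQ t = 1 ->
  (forall n, (#|Z n| <= M)%N) ->
  depends_only_on Z psi ->
  decodable pQ Nr psi ->
  secure pQ psi ->
  uniq s -> new_data_seq Z s ->
  randomness_size F L K pQ >= (size s)%:R - 1.
Proof.
(* [uniq s] follows from [new_data_seq Z s]. *)
move=> L_gt0 _ _ Nr_le_N N_dvd_K eM pQ_ge0 pQ_sum1 Z_le_M psi_dep psi_dec psi_sec _ new_s.
have H_X := entropy_X_on_ge L_gt0 Nr_le_N N_dvd_K eM Z_le_M pQ_ge0 pQ_sum1
  psi_dep psi_dec new_s.
have H_S := entropy_sumW_le F L K pQ_ge0 pQ_sum1.
have H_Q := entropy_Q_ge_of_secure pQ_ge0 pQ_sum1 psi_sec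
  (Y := X_on psi s) (f := restrict_servers s) (fun => erefl).
rewrite /randomness_size ler_pdivlMr ?ltr0n //; lra.
Qed.
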